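(* Let $I$ be an index set, $S,T\in GL(2,\mathbb R)$, and for $r\in I$ let $P_r=S\,\mathrm{diag}\{p_{1r},p_{2r}\}S^{-1}$, $Q_r=T\,\mathrm{diag}\{q_{1r},q_{2r}\}T^{-1}$ with all $p_{kr},q_{kr}$ nonzero reals. There exists a diffeomorphism (equivalently, a real-analytic diffeomorphism) $f\colon\overline{\mathbb R}\to\overline{\mathbb R}$ with $f(P_r(x))=Q_r(f(x))$ for all $x\in\overline{\mathbb R}$, $r\in I$, if and only if there exists $\varepsilon\in\{1,-1\}$ with $\dfrac{q_{1r}}{q_{2r}}=\Bigl(\dfrac{p_{1r}}{p_{2r}}\Bigr)^{\varepsilon}$ for all $r\in I$.
   Context: $\overline{\mathbb R}=\mathbb R\cup\{\infty\}$ with its standard smooth structure as the real projective line. A matrix $\begin{pmatrix}a&b\\c&d\end{pmatrix}\in GL(2,\mathbb R)$ acts on $\overline{\mathbb R}$ by $x\mapsto\frac{ax+b}{cx+d}$. *)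

From Stdlib Require Import Reals Lra.
Open Scope R_scope.

(** The real projective line  R ∪ {∞}:  [Some x] is the real x, [None] is ∞. *)
Definition P1 := option R.

Record mat2 := Mat2 { ma : R; mb : R; mc : R; md : R }.

Definition det2 (M : mat2) : R := ma M * md M - mb M * mc M.

Definition mmul (M N : mat2) : mat2 :=
  Mat2 (ma M * ma N + mb M * mc N) (ma M * mb N + mb M * md N)
       (mc M * ma N + md M * mc N) (mc M * mb N + md M * md N).

(** Inverse (meaningful when det2 M <> 0). *)
Definition minv (M : mat2) : mat2 :=
  Mat2 (md M / det2 M) (- mb M / det2 M) (- mc M / det2 M) (ma M / det2 M).

Definition diag2 (p q : R) : mat2 := Mat2 p 0 0 q.

Definition mob (M : mat2) (x : P1) : P1 :=
  match x with
  | Some x => if Req_EM_T (mc M * x + md M) 0 then None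
              else Some ((ma M * x + mb M) / (mc M * x + md M))
  | None => if Req_EM_T (mc M) 0 then None else Some (ma M / mc M)
  end.

(** Standard smooth atlas on R ∪ {∞}: chart 0 on R (x ↦ x),
    chart 1 on (R ∪ {∞}) \ {0}  (x ↦ 1/x, ∞ ↦ 0). *)
Definition in_dom (i : bool) (p : P1) : Prop :=
  if i then p <> Some 0 else p <> None.

Definition chart (i : bool) (p : P1) : R :=
  match p with
  | Some x => if i then / x else x
  | None => 0
  end.

Definition chart_inv (i : bool) (y : R) : P1 :=
  if i then (if Req_EM_T y 0 then None else Some (/ y)) else Some y.

Definition Cinf_on (g : R -> R) (x0 delta : R) : Prop :=
  exists gs : nat -> R -> R,
    (forall x, Rabs (x - x0) < delta -> gs O x = g x) /\
    (forall n x, Rabs (x - x0) < delta -> derivable_pt_lim (gs n) x (gs (S n) x)).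

Definition smooth_P1 (f : P1 -> P1) : Prop :=
  forall p : P1, exists i j : bool, in_dom i p /\
    exists delta, delta > 0 /\
      (forall y, Rabs (y - chart i p) < delta -> in_dom j (f (chart_inv i y))) /\
      Cinf_on (fun y => chart j (f (chart_inv i y))) (chart i p) delta.

Definition diffeo_P1 (f : P1 -> P1) : Prop :=
  exists g : P1 -> P1,
    (forall x, g (f x) = x) /\ (forall x, f (g x) = x) /\
    smooth_P1 f /\ smooth_P1 g.

From Stdlib Require Import Reals Lra ZArith Classical.
Open Scope R_scope.

(* Conjugating by the Möbius maps of S and T reduces everything to the diagonal
   maps x |-> (p1/p2) x and x |-> (q1/q2) x.  A conjugacy phi between them is a
   bijection, so one family is trivial iff the other is.  Otherwise some
   x |-> (q1/q2) x has exactly the two fixed points 0 and oo, and phi sends the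
   common fixed point 0 of the p-maps to one of them; differentiating
   phi o diag(p) = diag(q) o phi there (phi has nonzero derivative, being a
   diffeomorphism) gives p1/p2 = q1/q2 at 0, and p1/p2 = q2/q1 at oo where the
   chart is 1/x.  Conversely x |-> T S^-1 x, resp. x |-> T J S^-1 x with
   J x = 1/x, is a Möbius diffeomorphism conjugating the two families. *)

Lemma chart_inv_chart i p : in_dom i p -> chart_inv i (chart i p) = p.
Proof.
  destruct i, p as [x|]; simpl; intros Hp; try reflexivity; try contradiction.
  - assert (Hx : x <> 0) by (intros ->; auto).
    destruct (Req_EM_T (/ x) 0) as [E|_].
    + exfalso; exact (Rinv_neq_0_compat x Hx E).
    + rewrite Rinv_inv; reflexivity.
  - destruct (Req_EM_T 0 0); [reflexivity|lra].
Qed.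

Lemma chart_chart_inv i y : chart i (chart_inv i y) = y.
Proof.
  destruct i; simpl; [|reflexivity].
  destruct (Req_EM_T y 0); simpl; [congruence|apply Rinv_inv].
Qed.

Lemma in_dom_chart_inv i y : in_dom i (chart_inv i y).
Proof.
  destruct i; simpl; [|discriminate].
  destruct (Req_EM_T y 0) as [_|Hy]; [discriminate|].
  intros E; injection E; apply Rinv_neq_0_compat, Hy.
Qed.

Lemma chart_negb_chart_inv i y : y <> 0 ->
  in_dom (negb i) (chart_inv i y) /\ chart (negb i) (chart_inv i y) = / y.
Proof.
  intros Hy; destruct i; simpl.
  - destruct (Req_EM_T y 0); [contradiction|]. split; [discriminate|reflexivity].
  - split; [|reflexivity]. intros E; injection E; exact Hy.
Qed.

Lemma chart_neq0 i q : in_dom i q -> in_dom (negb i) q -> chart i q <> 0.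
Proof.
  destruct i, q as [x|]; simpl; intros Hi Hn; try contradiction.
  - apply Rinv_neq_0_compat; intros ->; auto.
  - intros ->; auto.
Qed.

Lemma derivable_pt_lim_near f g x d l : 0 < d ->
  (forall y, Rabs (y - x) < d -> f y = g y) ->
  derivable_pt_lim f x l -> derivable_pt_lim g x l.
Proof.
  intros Hd Hfg. apply derivable_pt_lim_locally_ext with (x - d) (x + d); [lra|].
  intros z Hz; apply Hfg, Rabs_def1; lra.
Qed.

Lemma derivable_pt_lim_affine a b x : derivable_pt_lim (fun y => a * y + b) x a.
Proof.
  intros eps He. exists (mkposreal 1 Rlt_0_1). intros h Hh _.
  replace ((a * (x + h) + b - (a * x + b)) / h - a) with 0 by (field; auto).
  rewrite Rabs_R0; lra.
Qed.

Lemma derivable_pt_lim_Rinv x : x <> 0 -> derivable_pt_lim Rinv x (- / x ^ 2).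
Proof.
  intros Hx.
  assert (H := derivable_pt_lim_div (fct_cte 1) id x 0 1
     (derivable_pt_lim_const 1 x) (derivable_pt_lim_id x) Hx).
  replace (- / x ^ 2) with ((0 * id x - 1 * fct_cte 1 x) / (id x)²)
    by (unfold fct_cte, id, Rsqr; field; auto).
  apply derivable_pt_lim_ext with (2 := H).
  intros y; unfold div_fct, fct_cte, id, Rdiv; ring.
Qed.

Lemma derivable_pt_lim_ball_continuous f x l : derivable_pt_lim f x l ->
  forall e, e > 0 -> exists d, d > 0 /\
    forall y, Rabs (y - x) < d -> Rabs (f y - f x) < e.
Proof.
  intros Hf e He.
  assert (Hc : continuity_pt f x) by (apply derivable_continuous_pt; exists l; exact Hf).
  destruct (Hc e He) as [d [Hd Hy]]. exists d; split; [exact Hd|].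
  intros y Hyx. destruct (Req_EM_T y x) as [->|Hne].
  - unfold Rminus; rewrite Rplus_opp_r, Rabs_R0; lra.
  - apply Hy. split; [split; [exact I|auto]|exact Hyx].
Qed.

Definition chart_derive_lim (h : P1 -> P1) (p : P1) (i j : bool) (l : R) : Prop :=
  in_dom i p /\ exists d, d > 0 /\
   (forall y, Rabs (y - chart i p) < d -> in_dom j (h (chart_inv i y))) /\
   derivable_pt_lim (fun y => chart j (h (chart_inv i y))) (chart i p) l.

Lemma chart_derive_lim_in_dom h p i j l :
  chart_derive_lim h p i j l -> in_dom j (h p).
Proof.
  intros [Hi [d [Hd [Hn _]]]]. rewrite <- (chart_inv_chart i p Hi).
  apply Hn. unfold Rminus; rewrite Rplus_opp_r, Rabs_R0; exact Hd.
Qed.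

Lemma chart_derive_lim_comp f g p i j k l1 l2 :
  chart_derive_lim f p i j l1 -> chart_derive_lim g (f p) j k l2 ->
  chart_derive_lim (fun x => g (f x)) p i k (l2 * l1).
Proof.
  intros [Hi [d1 [Hd1 [Hn1 Hl1]]]] [Hj [d2 [Hd2 [Hn2 Hl2]]]].
  set (F := fun y => chart j (f (chart_inv i y))) in *.
  set (G := fun z => chart k (g (chart_inv j z))) in *.
  assert (HF0 : F (chart i p) = chart j (f p)) by (unfold F; rewrite chart_inv_chart; auto).
  destruct (derivable_pt_lim_ball_continuous _ _ _ Hl1 d2 Hd2) as [d3 [Hd3 Hc]].
  assert (Hd : 0 < Rmin d1 d3) by (apply Rmin_pos; lra).
  assert (Hnear : forall y, Rabs (y - chart i p) < Rmin d1 d3 ->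
     chart k (g (f (chart_inv i y))) = G (F y) /\ in_dom k (g (f (chart_inv i y)))).
  { intros y Hy.
    assert (Hdom : in_dom j (f (chart_inv i y)))
      by (apply Hn1; eapply Rlt_le_trans; [exact Hy|apply Rmin_l]).
    assert (HFy : Rabs (F y - chart j (f p)) < d2)
      by (rewrite <- HF0; apply Hc; eapply Rlt_le_trans; [exact Hy|apply Rmin_r]).
    unfold G, F. rewrite chart_inv_chart by exact Hdom.
    split; [reflexivity|].
    specialize (Hn2 _ HFy). unfold F in Hn2. rewrite chart_inv_chart in Hn2; auto. }
  split; [exact Hi|]. exists (Rmin d1 d3). split; [lra|]. split.
  - intros y Hy; apply Hnear, Hy.
  - apply derivable_pt_lim_near with (comp G F) (Rmin d1 d3); [exact Hd| |].
    + intros y Hy; symmetry; apply Hnear, Hy.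
    + apply derivable_pt_lim_comp; [exact Hl1|]. rewrite HF0; exact Hl2.
Qed.

Lemma chart_derive_lim_ext h h' p i j l : (forall x, h x = h' x) ->
  chart_derive_lim h p i j l -> chart_derive_lim h' p i j l.
Proof.
  intros E [Hi [d [Hd [Hn Hl]]]]. split; [exact Hi|]. exists d; split; [exact Hd|].
  split; [intros y Hy; rewrite <- E; auto|].
  apply derivable_pt_lim_ext with (2 := Hl). intros y; rewrite E; reflexivity.
Qed.

Lemma chart_derive_lim_unique h p i j l1 l2 :
  chart_derive_lim h p i j l1 -> chart_derive_lim h p i j l2 -> l1 = l2.
Proof. intros [_ [_ [_ [_ H1]]]] [_ [_ [_ [_ H2]]]]. eapply uniqueness_limite; eauto. Qed.

Lemma chart_derive_lim_id_same i q : in_dom i q -> chart_derive_lim (fun x => x) q i i 1.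
Proof.
  intros Hi. split; [exact Hi|]. exists 1; split; [lra|]. split.
  - intros y _; apply in_dom_chart_inv.
  - apply derivable_pt_lim_ext with (2 := derivable_pt_lim_id _).
    intros y; rewrite chart_chart_inv; reflexivity.
Qed.

Lemma chart_derive_lim_id i j q : in_dom i q -> in_dom j q ->
  exists t, chart_derive_lim (fun x => x) q i j t.
Proof.
  intros Hi Hj. destruct (Bool.bool_dec j i) as [->|Hne].
  { exists 1; apply chart_derive_lim_id_same, Hi. }
  replace j with (negb i) in * by (destruct i, j; simpl; congruence).
  set (y0 := chart i q). assert (Hy0 : y0 <> 0) by (apply chart_neq0; auto).
  assert (Hpos : Rabs y0 > 0) by (apply Rabs_pos_lt, Hy0).
  assert (Hnz : forall y, Rabs (y - y0) < Rabs y0 -> y <> 0).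
  { intros y Hy ->. rewrite Rminus_0_l, Rabs_Ropp in Hy; lra. }
  exists (- / y0 ^ 2). split; [exact Hi|]. exists (Rabs y0). split; [exact Hpos|]. split.
  - intros y Hy; apply chart_negb_chart_inv, Hnz, Hy.
  - apply derivable_pt_lim_near with Rinv (Rabs y0); [exact Hpos| |].
    + intros y Hy; symmetry; apply chart_negb_chart_inv, Hnz, Hy.
    + apply derivable_pt_lim_Rinv, Hy0.
Qed.

Lemma chart_derive_lim_change_charts h p i j l i' j' :
  chart_derive_lim h p i j l -> in_dom i' p -> in_dom j' (h p) ->
  exists l', chart_derive_lim h p i' j' l'.
Proof.
  intros H Hi' Hj'.
  destruct (chart_derive_lim_id i' i p Hi' (proj1 H)) as [t1 T1].
  destruct (chart_derive_lim_id j j' (h p) (chart_derive_lim_in_dom _ _ _ _ _ H) Hj')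
    as [t2 T2].
  eexists. exact (chart_derive_lim_comp _ _ _ _ _ _ _ _
                    (chart_derive_lim_comp _ _ _ _ _ _ _ _ T1 H) T2).
Qed.

Lemma chart_derive_lim_of_smooth h p i j : smooth_P1 h -> in_dom i p -> in_dom j (h p) ->
  exists l, chart_derive_lim h p i j l.
Proof.
  intros Hs Hi Hj. destruct (Hs p) as [i0 [j0 [Hi0 [d [Hd [Hn [gs [G0 GS]]]]]]]].
  apply (chart_derive_lim_change_charts h p i0 j0 (gs 1%nat (chart i0 p))); auto.
  split; [exact Hi0|]. exists d; split; [exact Hd|]. split; [exact Hn|].
  apply derivable_pt_lim_near with (gs 0%nat) d; [exact Hd|exact G0|].
  apply GS. unfold Rminus; rewrite Rplus_opp_r, Rabs_R0; exact Hd.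
Qed.

Definition immersive (h : P1 -> P1) : Prop :=
  forall p i j, in_dom i p -> in_dom j (h p) ->
    exists l, l <> 0 /\ chart_derive_lim h p i j l.

Lemma in_dom_some q : exists i, in_dom i q.
Proof. destruct q; [exists false|exists true]; simpl; discriminate. Qed.

Lemma immersive_comp f g : immersive f -> immersive g -> immersive (fun x => g (f x)).
Proof.
  intros Hf Hg p i k Hi Hk.
  destruct (in_dom_some (f p)) as [j Hj].
  destruct (Hf p i j Hi Hj) as [l1 [N1 D1]].
  destruct (Hg (f p) j k Hj Hk) as [l2 [N2 D2]].
  exists (l2 * l1); split; [apply Rmult_integral_contrapositive_currified; auto|].
  exact (chart_derive_lim_comp _ _ _ _ _ _ _ _ D1 D2).
Qed.

Lemma diffeo_immersive f : diffeo_P1 f -> immersive f.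
Proof.
  intros [g [gf [fg [sf sg]]]] p i j Hi Hj.
  destruct (chart_derive_lim_of_smooth f p i j sf Hi Hj) as [l Df].
  destruct (chart_derive_lim_of_smooth g (f p) j i sg Hj) as [m Dg]; [rewrite gf; exact Hi|].
  assert (Hid : chart_derive_lim (fun x => x) p i i (m * l)).
  { apply chart_derive_lim_ext with (fun x => g (f x)); [exact gf|].
    exact (chart_derive_lim_comp _ _ _ _ _ _ _ _ Df Dg). }
  assert (Hml : m * l = 1)
    by exact (chart_derive_lim_unique _ _ _ _ _ _ Hid (chart_derive_lim_id_same i p Hi)).
  exists l; split; [intros ->; lra|exact Df].
Qed.

Lemma chart_derive_lim_conj_fixed (phi A B : P1 -> P1) p0 i k L la mu :
  L <> 0 -> chart_derive_lim phi p0 i k L ->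
  chart_derive_lim A p0 i i la -> A p0 = p0 ->
  chart_derive_lim B (phi p0) k k mu -> (forall x, phi (A x) = B (phi x)) -> la = mu.
Proof.
  intros HL Hphi HA HA0 HB E.
  assert (Hphi' : chart_derive_lim phi (A p0) i k L) by (rewrite HA0; exact Hphi).
  assert (C1 := chart_derive_lim_comp _ _ _ _ _ _ _ _ HA Hphi').
  assert (C2 := chart_derive_lim_comp _ _ _ _ _ _ _ _ Hphi HB).
  apply (chart_derive_lim_ext _ (fun x => B (phi x))) in C1; [|exact E].
  apply (Rmult_eq_reg_l L); [|exact HL].
  rewrite (Rmult_comm L mu). exact (chart_derive_lim_unique _ _ _ _ _ _ C1 C2).
Qed.

Definition mapv (M : mat2) (v : R * R) : R * R :=
  (ma M * fst v + mb M * snd v, mc M * fst v + md M * snd v).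

(* Homogeneous coordinates: [hom] lifts a point of the projective line to a
   nonzero vector, [proj] maps a nonzero vector back to its point. *)
Definition hom (x : P1) : R * R :=
  match x with Some x => (x, 1) | None => (1, 0) end.

Definition proj (v : R * R) : P1 :=
  if Req_EM_T (snd v) 0 then None else Some (fst v / snd v).

Lemma proj_hom x : proj (hom x) = x.
Proof.
  destruct x as [x|]; unfold proj; simpl.
  - destruct (Req_EM_T 1 0); [lra|]. f_equal; field.
  - destruct (Req_EM_T 0 0); [reflexivity|lra].
Qed.

Lemma hom_neq0 x : hom x <> (0, 0).
Proof. destruct x; simpl; intros E; injection E; lra. Qed.

Lemma proj_scale k v : k <> 0 -> proj (k * fst v, k * snd v) = proj v.
Proof.
  intros Hk; destruct v as [v1 v2]; unfold proj; simpl.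
  destruct (Req_EM_T (k * v2) 0) as [E|E], (Req_EM_T v2 0) as [E'|E']; try reflexivity.
  - destruct (Rmult_integral _ _ E); contradiction.
  - subst; rewrite Rmult_0_r in E; contradiction.
  - f_equal; field; auto.
Qed.

Lemma mob_proj M x : mob M x = proj (mapv M (hom x)).
Proof.
  destruct x; unfold proj, mapv; simpl; rewrite ?Rmult_1_r, ?Rmult_0_r, ?Rplus_0_r.
  all: reflexivity.
Qed.

Lemma mob_proj_vec M v : v <> (0, 0) -> mob M (proj v) = proj (mapv M v).
Proof.
  destruct v as [v1 v2]; intros Hv. unfold proj at 1; simpl.
  destruct (Req_EM_T v2 0) as [->|Hv2].
  - assert (Hv1 : v1 <> 0) by (intros ->; auto).
    rewrite mob_proj, <- (proj_scale v1) by exact Hv1.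
    unfold mapv; simpl; do 2 f_equal; ring.
  - rewrite mob_proj, <- (proj_scale v2) by exact Hv2.
    unfold mapv; simpl; f_equal; f_equal; field; exact Hv2.
Qed.

Lemma mapv_mmul M N v : mapv (mmul M N) v = mapv M (mapv N v).
Proof. unfold mapv, mmul; simpl; f_equal; ring. Qed.

Lemma mapv_neq0 M v : det2 M <> 0 -> v <> (0, 0) -> mapv M v <> (0, 0).
Proof.
  destruct M as [a b c d], v as [v1 v2]; unfold det2, mapv; simpl; intros HM Hv E.
  injection E as E1 E2. apply Hv.
  assert (H1 : v1 * (a * d - b * c) = 0).
  { replace (v1 * (a * d - b * c)) with (d * (a * v1 + b * v2) - b * (c * v1 + d * v2))
      by ring. rewrite E1, E2; ring. }
  assert (H2 : v2 * (a * d - b * c) = 0).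
  { replace (v2 * (a * d - b * c)) with (a * (c * v1 + d * v2) - c * (a * v1 + b * v2))
      by ring. rewrite E1, E2; ring. }
  f_equal; [destruct (Rmult_integral _ _ H1)|destruct (Rmult_integral _ _ H2)]; tauto.
Qed.

Lemma mob_comp M N x : det2 N <> 0 -> mob (mmul M N) x = mob M (mob N x).
Proof.
  intros HN. rewrite (mob_proj N), mob_proj_vec by (apply mapv_neq0, hom_neq0; exact HN).
  rewrite mob_proj, mapv_mmul; reflexivity.
Qed.

Definition mscale (k : R) (M : mat2) : mat2 :=
  Mat2 (k * ma M) (k * mb M) (k * mc M) (k * md M).

Lemma mob_mscale k M x : k <> 0 -> mob (mscale k M) x = mob M x.
Proof.
  intros Hk. rewrite !mob_proj, <- (proj_scale k (mapv M (hom x))) by exact Hk.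
  unfold mapv, mscale; simpl; f_equal; f_equal; ring.
Qed.

Definition I2 : mat2 := Mat2 1 0 0 1.

Definition J2 : mat2 := Mat2 0 1 1 0.

Lemma mob_I2 x : mob I2 x = x.
Proof.
  rewrite mob_proj. replace (mapv I2 (hom x)) with (hom x); [apply proj_hom|].
  destruct (hom x); unfold mapv, I2; simpl; f_equal; ring.
Qed.

Lemma det_mmul M N : det2 (mmul M N) = det2 M * det2 N.
Proof. unfold det2, mmul; simpl; ring. Qed.

Lemma det_mmul_neq0 M N : det2 M <> 0 -> det2 N <> 0 -> det2 (mmul M N) <> 0.
Proof. rewrite det_mmul; apply Rmult_integral_contrapositive_currified. Qed.

Lemma det_minv M : det2 M <> 0 -> det2 (minv M) = / det2 M.
Proof. destruct M; unfold minv, det2; simpl; intros; field; auto. Qed.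

Lemma det_minv_neq0 M : det2 M <> 0 -> det2 (minv M) <> 0.
Proof. intros HM; rewrite det_minv by exact HM; apply Rinv_neq_0_compat, HM. Qed.

Lemma det_diag2_neq0 a b : a <> 0 -> b <> 0 -> det2 (diag2 a b) <> 0.
Proof.
  intros Ha Hb; unfold det2, diag2; simpl. rewrite Rmult_0_l, Rminus_0_r.
  apply Rmult_integral_contrapositive_currified; assumption.
Qed.

Lemma det_J2_neq0 : det2 J2 <> 0.
Proof. unfold det2, J2; simpl; lra. Qed.

Lemma mmul_minv_l M : det2 M <> 0 -> mmul (minv M) M = I2.
Proof. destruct M; unfold minv, det2, mmul, I2; simpl; intros; f_equal; field; auto. Qed.

Lemma mmul_minv_r M : det2 M <> 0 -> mmul M (minv M) = I2.
Proof. destruct M; unfold minv, det2, mmul, I2; simpl; intros; f_equal; field; auto. Qed.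

Lemma mob_minv_l M x : det2 M <> 0 -> mob (minv M) (mob M x) = x.
Proof. intros HM; rewrite <- mob_comp, mmul_minv_l by exact HM; apply mob_I2. Qed.

Lemma mob_minv_r M x : det2 M <> 0 -> mob M (mob (minv M) x) = x.
Proof.
  intros HM; rewrite <- mob_comp, mmul_minv_r by (auto using det_minv_neq0); apply mob_I2.
Qed.

Lemma mob_conj S D x : det2 S <> 0 -> det2 D <> 0 ->
  mob (mmul S (mmul D (minv S))) x = mob S (mob D (mob (minv S) x)).
Proof.
  intros HS HD.
  rewrite !mob_comp by auto using det_mmul_neq0, det_minv_neq0. reflexivity.
Qed.

Lemma mob_J2_diag2 a b x : a <> 0 -> b <> 0 ->
  mob J2 (mob (diag2 a b) x) = mob (diag2 b a) (mob J2 x).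
Proof.
  intros Ha Hb. rewrite <- !mob_comp by auto using det_diag2_neq0, det_J2_neq0.
  f_equal; unfold mmul, J2, diag2; simpl; f_equal; ring.
Qed.

Lemma Cinf_on_ext g h x0 d : (forall y, Rabs (y - x0) < d -> g y = h y) ->
  Cinf_on h x0 d -> Cinf_on g x0 d.
Proof. intros E [gs [G0 GS]]. exists gs; split; [intros; rewrite G0, E; auto|exact GS]. Qed.

(* The (n+1)-th derivative of (al y + be) / (ga y + de) is
   frac_lin_deriv_coef n / (ga y + de) ^ (n + 2). *)
Fixpoint frac_lin_deriv_coef (al be ga de : R) (n : nat) : R :=
  match n with
  | O => al * de - be * ga
  | S m => - INR (S (S m)) * ga * frac_lin_deriv_coef al be ga de m
  end.

Lemma Cinf_on_frac_lin al be ga de x0 d :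
  (forall y, Rabs (y - x0) < d -> ga * y + de <> 0) ->
  Cinf_on (fun y => (al * y + be) / (ga * y + de)) x0 d.
Proof.
  intros Hnz. set (c := frac_lin_deriv_coef al be ga de).
  exists (fun n => match n with
                   | O => fun y => (al * y + be) / (ga * y + de)
                   | S m => fun y => c m / (ga * y + de) ^ S (S m)
                   end).
  split; [reflexivity|]. intros [|m] x Hx; specialize (Hnz x Hx).
  - assert (H := derivable_pt_lim_div _ _ x al ga (derivable_pt_lim_affine al be x)
                   (derivable_pt_lim_affine ga de x) Hnz).
    replace (c 0%nat / (ga * x + de) ^ 2)
      with ((al * (ga * x + de) - ga * (al * x + be)) / (ga * x + de)²)
      by (unfold c, Rsqr; simpl; field; exact Hnz).
    exact H.
  - assert (Hpow := derivable_pt_lim_comp _ (fun z => z ^ S (S m)) x ga _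
                      (derivable_pt_lim_affine ga de x)
                      (derivable_pt_lim_pow (ga * x + de) (S (S m)))).
    assert (H := derivable_pt_lim_div _ _ x 0 _ (derivable_pt_lim_const (c m) x) Hpow
                   (pow_nonzero _ _ Hnz)).
    replace (c (S m) / (ga * x + de) ^ S (S (S m))) with
      ((0 * (ga * x + de) ^ S (S m)
        - INR (S (S m)) * (ga * x + de) ^ pred (S (S m)) * ga * fct_cte (c m) x)
       / ((ga * x + de) ^ S (S m))²).
    + exact H.
    + assert (Hp : (ga * x + de) ^ m <> 0) by (apply pow_nonzero; exact Hnz).
      unfold fct_cte, Rsqr; simpl pred.
      change (c (S m)) with (- INR (S (S m)) * ga * c m). simpl pow.
      field; auto.
Qed.

Lemma Cinf_on_mob M x0 : mc M * x0 + md M <> 0 -> exists d, d > 0 /\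
  (forall y, Rabs (y - x0) < d -> mob M (Some y) <> None) /\
  Cinf_on (fun y => chart false (mob M (Some y))) x0 d.
Proof.
  intros H0.
  assert (Hc : continuity_pt (fun y => mc M * y + md M) x0)
    by (apply derivable_continuous_pt; eexists; apply derivable_pt_lim_affine).
  destruct (continuous_neq_0 _ _ Hc H0) as [d Hd].
  assert (Hnz : forall y, Rabs (y - x0) < d -> mc M * y + md M <> 0).
  { intros y Hy. replace y with (x0 + (y - x0)) by ring. apply Hd, Hy. }
  exists d; split; [apply cond_pos|]. split.
  - intros y Hy; simpl.
    destruct (Req_EM_T _ 0) as [E|_]; [exfalso; exact (Hnz y Hy E)|discriminate].
  - apply (Cinf_on_ext _ (fun y => (ma M * y + mb M) / (mc M * y + md M)));
      [|apply Cinf_on_frac_lin, Hnz].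
    intros y Hy; simpl. destruct (Req_EM_T _ 0) as [E|_]; [exact (False_ind _ (Hnz y Hy E))|].
    reflexivity.
Qed.

(* The charts are the Möbius maps id and J2 followed by the chart [false]. *)
Definition chart_mat (i : bool) : mat2 := if i then J2 else I2.

Lemma det_chart_mat_neq0 i : det2 (chart_mat i) <> 0.
Proof. destruct i; [exact det_J2_neq0|unfold det2, I2; simpl; lra]. Qed.

Lemma chart_inv_mob i y : chart_inv i y = mob (chart_mat i) (Some y).
Proof.
  destruct i; [|symmetry; apply mob_I2]. unfold chart_inv, J2; simpl.
  replace (1 * y + 0) with y by ring.
  destruct (Req_EM_T y 0); [reflexivity|f_equal; field; assumption].
Qed.

Lemma chart_mob i q : chart i q = chart false (mob (chart_mat i) q).
Proof.
  destruct i; [|rewrite mob_I2; reflexivity].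
  destruct q as [x|]; unfold J2; simpl.
  - replace (1 * x + 0) with x by ring.
    destruct (Req_EM_T x 0) as [->|Hx]; simpl; [apply Rinv_0|field; exact Hx].
  - destruct (Req_EM_T 1 0); [lra|]. simpl; field.
Qed.

Lemma in_dom_mob i q : in_dom i q <-> mob (chart_mat i) q <> None.
Proof.
  destruct i; [|rewrite mob_I2; reflexivity].
  destruct q as [x|]; unfold J2; simpl.
  - replace (1 * x + 0) with x by ring.
    destruct (Req_EM_T x 0) as [->|Hx]; split; intros H; congruence.
  - destruct (Req_EM_T 1 0); [lra|]. split; discriminate.
Qed.

Lemma chart_row_neq0 N x0 : det2 N <> 0 ->
  exists j, mc (mmul (chart_mat j) N) * x0 + md (mmul (chart_mat j) N) <> 0.
Proof.
  intros HN. assert (Hv := mapv_neq0 N (x0, 1) HN ltac:(intros E; injection E; lra)).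
  unfold mapv in Hv; simpl in Hv.
  destruct (Req_EM_T (mc N * x0 + md N * 1) 0) as [E|E]; [exists true|exists false];
    unfold chart_mat, mmul, J2, I2; simpl; intros E'; apply Hv; f_equal; lra.
Qed.

Lemma smooth_mob M : det2 M <> 0 -> smooth_P1 (mob M).
Proof.
  intros HM p. set (i := match p with Some _ => false | None => true end).
  assert (Hi : in_dom i p) by (destruct p; simpl; discriminate).
  assert (HN : det2 (mmul M (chart_mat i)) <> 0)
    by auto using det_mmul_neq0, det_chart_mat_neq0.
  destruct (chart_row_neq0 _ (chart i p) HN) as [j Hj].
  destruct (Cinf_on_mob _ _ Hj) as [d [Hd [Hdom HC]]].
  assert (Hrepr : forall y, mob (chart_mat j) (mob M (chart_inv i y))
                          = mob (mmul (chart_mat j) (mmul M (chart_mat i))) (Some y))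
    by (intros y; rewrite chart_inv_mob, !mob_comp; auto using det_chart_mat_neq0).
  exists i, j. split; [exact Hi|]. exists d. split; [exact Hd|]. split.
  - intros y Hy; apply in_dom_mob; rewrite Hrepr; apply Hdom, Hy.
  - apply Cinf_on_ext with (2 := HC).
    intros y _; rewrite chart_mob, Hrepr; reflexivity.
Qed.

Lemma diffeo_mob M : det2 M <> 0 -> diffeo_P1 (mob M).
Proof.
  intros HM. exists (mob (minv M)).
  split; [|split; [|split]]; intros; auto using mob_minv_l, mob_minv_r, smooth_mob, det_minv_neq0.
Qed.

Lemma mob_diag2_Some a b y : b <> 0 -> mob (diag2 a b) (Some y) = Some (a * y / b).
Proof.
  intros Hb; simpl. destruct (Req_EM_T (0 * y + b) 0); [lra|]. f_equal; field; exact Hb.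
Qed.

Lemma mob_diag2_eq_ratio a b c d x : a <> 0 -> b <> 0 -> c <> 0 -> d <> 0 ->
  c / d = a / b -> mob (diag2 c d) x = mob (diag2 a b) x.
Proof.
  intros Ha Hb Hc Hd E. rewrite <- (mob_mscale (d / b) (diag2 a b))
    by (apply Rmult_integral_contrapositive_currified; auto using Rinv_neq_0_compat).
  f_equal; unfold mscale, diag2; simpl; f_equal; try ring; [|field; exact Hb].
  replace c with (c / d * d) by (field; exact Hd). rewrite E; field; exact Hb.
Qed.

Lemma mob_diag2_id_iff a b : a <> 0 -> b <> 0 ->
  (forall x, mob (diag2 a b) x = x) <-> a = b.
Proof.
  intros Ha Hb. split.
  - intros H. specialize (H (Some 1)). rewrite mob_diag2_Some in H by exact Hb.
    injection H as H. apply (Rmult_eq_reg_r (/ b)); [|apply Rinv_neq_0_compat, Hb].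
    rewrite Rinv_r by exact Hb. rewrite <- H; field; exact Hb.
  - intros <- x. rewrite (mob_diag2_eq_ratio 1 1); try lra; auto.
    + apply mob_I2.
    + rewrite !Rdiv_diag; auto; lra.
Qed.

Lemma mob_diag2_fixed a b x : a <> b -> b <> 0 ->
  mob (diag2 a b) x = x -> x = Some 0 \/ x = None.
Proof.
  intros Hab Hb. destruct x as [y|]; [|right; reflexivity].
  rewrite mob_diag2_Some by exact Hb. intros E; injection E as E. left; f_equal.
  assert (Hy : (a - b) * y = 0).
  { replace ((a - b) * y) with ((a * y / b - y) * b) by (field; exact Hb). rewrite E; ring. }
  destruct (Rmult_integral _ _ Hy) as [H|H]; [exfalso; apply Hab; lra|exact H].
Qed.

Lemma chart_derive_lim_diag2_0 a b : b <> 0 ->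
  chart_derive_lim (mob (diag2 a b)) (Some 0) false false (a / b).
Proof.
  intros Hb. split; [discriminate|]. exists 1; split; [lra|]. split.
  - intros y _. simpl chart_inv. rewrite mob_diag2_Some by exact Hb. discriminate.
  - apply derivable_pt_lim_ext with (2 := derivable_pt_lim_affine (a / b) 0 _).
    intros y. simpl chart_inv. rewrite mob_diag2_Some by exact Hb. simpl; field; exact Hb.
Qed.

Lemma chart_derive_lim_diag2_infty a b : a <> 0 -> b <> 0 ->
  chart_derive_lim (mob (diag2 a b)) None true true (b / a).
Proof.
  intros Ha Hb. split; [discriminate|]. exists 1; split; [lra|]. split.
  - intros y _. unfold chart_inv. destruct (Req_EM_T y 0) as [_|Hy].
    + simpl. destruct (Req_EM_T 0 0); [discriminate|lra].
    + rewrite mob_diag2_Some by exact Hb. intros E; injection E as E.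
      apply Ha. replace a with (a * / y / b * (y * b)) by (field; auto). rewrite E; ring.
  - apply derivable_pt_lim_ext with (2 := derivable_pt_lim_affine (b / a) 0 _).
    intros y. unfold chart_inv. destruct (Req_EM_T y 0) as [->|Hy].
    + simpl. destruct (Req_EM_T 0 0); [simpl; ring|lra].
    + rewrite mob_diag2_Some by exact Hb. simpl; field; auto.
Qed.

Section DiagonalConjugacy.

Variables (I : Type) (phi psi : P1 -> P1) (p1 p2 q1 q2 : I -> R).
Hypotheses (hp1 : forall r, p1 r <> 0) (hp2 : forall r, p2 r <> 0)
           (hq1 : forall r, q1 r <> 0) (hq2 : forall r, q2 r <> 0).
Hypotheses (psi_phi : forall x, psi (phi x) = x) (phi_psi : forall x, phi (psi x) = x).
Hypothesis phi_immersive : immersive phi.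
Hypothesis phi_equiv : forall r x,
  phi (mob (diag2 (p1 r) (p2 r)) x) = mob (diag2 (q1 r) (q2 r)) (phi x).

Lemma conj_diag2_scalar r : p1 r = p2 r <-> q1 r = q2 r.
Proof.
  rewrite <- (mob_diag2_id_iff (p1 r) (p2 r)), <- (mob_diag2_id_iff (q1 r) (q2 r)) by auto.
  split; intros H x.
  - rewrite <- (phi_psi x), <- phi_equiv, H; reflexivity.
  - rewrite <- (psi_phi (mob _ x)), phi_equiv, H; apply psi_phi.
Qed.

Lemma conj_diag2_multiplier r k mu : in_dom k (phi (Some 0)) ->
  chart_derive_lim (mob (diag2 (q1 r) (q2 r))) (phi (Some 0)) k k mu ->
  p1 r / p2 r = mu.
Proof.
  intros Hk Hq. destruct (phi_immersive (Some 0) false k) as [L [HL Hphi]];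
    [discriminate|exact Hk|].
  apply (chart_derive_lim_conj_fixed phi (mob (diag2 (p1 r) (p2 r)))
           (mob (diag2 (q1 r) (q2 r))) _ _ _ _ _ _ HL Hphi);
    [apply chart_derive_lim_diag2_0, hp2| |exact Hq|apply phi_equiv].
  rewrite mob_diag2_Some by apply hp2. f_equal; field; apply hp2.
Qed.

Lemma conj_diag2_ratio :
  (forall r, q1 r / q2 r = p1 r / p2 r) \/ (forall r, q1 r / q2 r = p2 r / p1 r).
Proof.
  destruct (classic (exists r0, p1 r0 <> p2 r0)) as [[r0 Hr0]|Hall].
  - assert (Hq0 : q1 r0 <> q2 r0) by (rewrite <- conj_diag2_scalar; exact Hr0).
    assert (Hfix : mob (diag2 (q1 r0) (q2 r0)) (phi (Some 0)) = phi (Some 0)).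
    { rewrite <- phi_equiv, mob_diag2_Some by auto. do 2 f_equal; field; auto. }
    destruct (mob_diag2_fixed _ _ _ Hq0 (hq2 r0) Hfix) as [Hphi0|Hphi0];
      [left|right]; intros r.
    + symmetry; apply conj_diag2_multiplier with false; rewrite Hphi0;
        [discriminate|apply chart_derive_lim_diag2_0, hq2].
    + (* In the chart 1/x at infinity the multiplier of x |-> (q1/q2) x is q2/q1. *)
      assert (E : p1 r / p2 r = q2 r / q1 r).
      { apply conj_diag2_multiplier with true; rewrite Hphi0;
          [discriminate|apply chart_derive_lim_diag2_infty; auto]. }
      replace (q1 r / q2 r) with (/ (q2 r / q1 r)) by (field; auto).
      rewrite <- E; field; auto.
  - left; intros r.
    assert (Hp : p1 r = p2 r) by (apply NNPP; intros Hne; apply Hall; exists r; exact Hne).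
    assert (Hq : q1 r = q2 r) by (apply conj_diag2_scalar, Hp).
    rewrite Hp, Hq, !Rdiv_diag; auto.
Qed.

End DiagonalConjugacy.

Lemma conj_ratio_of_diffeo (I : Type) (S T : mat2) (p1 p2 q1 q2 : I -> R) (f : P1 -> P1) :
  det2 S <> 0 -> det2 T <> 0 ->
  (forall r, p1 r <> 0) -> (forall r, p2 r <> 0) ->
  (forall r, q1 r <> 0) -> (forall r, q2 r <> 0) ->
  diffeo_P1 f ->
  (forall r x, f (mob (mmul S (mmul (diag2 (p1 r) (p2 r)) (minv S))) x)
               = mob (mmul T (mmul (diag2 (q1 r) (q2 r)) (minv T))) (f x)) ->
  (forall r, q1 r / q2 r = p1 r / p2 r) \/ (forall r, q1 r / q2 r = p2 r / p1 r).
Proof.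
  intros HS HT hp1 hp2 hq1 hq2 Hf Hconj. pose proof Hf as [g [gf [fg _]]].
  apply (conj_diag2_ratio I (fun x => mob (minv T) (f (mob S x)))
                            (fun z => mob (minv S) (g (mob T z))));
    auto; intros.
  - rewrite mob_minv_r, gf, mob_minv_l by exact HT || exact HS; reflexivity.
  - rewrite mob_minv_r, fg, mob_minv_l by exact HS || exact HT; reflexivity.
  - apply immersive_comp; [apply immersive_comp|];
      auto using diffeo_immersive, diffeo_mob, det_minv_neq0.
  - rewrite <- (mob_minv_l S x) at 1 by exact HS.
    rewrite <- mob_conj, Hconj, mob_conj, mob_minv_l by auto using det_diag2_neq0.
    reflexivity.
Qed.

Lemma conj_of_ratio (I : Type) (S T : mat2) (p1 p2 q1 q2 : I -> R) :
  det2 S <> 0 -> det2 T <> 0 ->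
  (forall r, p1 r <> 0) -> (forall r, p2 r <> 0) ->
  (forall r, q1 r <> 0) -> (forall r, q2 r <> 0) ->
  (forall r, q1 r / q2 r = p1 r / p2 r) \/ (forall r, q1 r / q2 r = p2 r / p1 r) ->
  exists f, diffeo_P1 f /\
    forall r x, f (mob (mmul S (mmul (diag2 (p1 r) (p2 r)) (minv S))) x)
                = mob (mmul T (mmul (diag2 (q1 r) (q2 r)) (minv T))) (f x).
Proof.
  intros HS HT hp1 hp2 hq1 hq2 [H|H].
  - exists (mob (mmul T (minv S))). split.
    + auto using diffeo_mob, det_mmul_neq0, det_minv_neq0.
    + intros r x. rewrite !mob_conj, !mob_comp, !mob_minv_l
        by auto using det_minv_neq0, det_diag2_neq0.
      rewrite (mob_diag2_eq_ratio (p1 r) (p2 r) (q1 r) (q2 r)); auto.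
  - (* Here x |-> 1/x turns the multiplier p1/p2 into p2/p1. *)
    exists (mob (mmul T (mmul J2 (minv S)))). split.
    + auto using diffeo_mob, det_mmul_neq0, det_J2_neq0, det_minv_neq0.
    + intros r x. rewrite !mob_conj, !mob_comp, !mob_minv_l
        by auto using det_mmul_neq0, det_minv_neq0, det_diag2_neq0, det_J2_neq0.
      rewrite mob_J2_diag2, (mob_diag2_eq_ratio (p2 r) (p1 r) (q1 r) (q2 r)); auto.
Qed.

Theorem theorem12p7 (I : Type) (S T : mat2) (p1 p2 q1 q2 : I -> R)
  (hS : det2 S <> 0) (hT : det2 T <> 0)
  (hp1 : forall r, p1 r <> 0) (hp2 : forall r, p2 r <> 0)
  (hq1 : forall r, q1 r <> 0) (hq2 : forall r, q2 r <> 0) :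
  (exists f : P1 -> P1, diffeo_P1 f /\
     forall (r : I) (x : P1),
       f (mob (mmul S (mmul (diag2 (p1 r) (p2 r)) (minv S))) x)
       = mob (mmul T (mmul (diag2 (q1 r) (q2 r)) (minv T))) (f x))
  <->
  (exists eps : Z, (eps = 1%Z \/ eps = (-1)%Z) /\
     forall r : I, q1 r / q2 r = powerRZ (p1 r / p2 r) eps).
Proof.
  split.
  - intros [f [Hf Hconj]].
    destruct (conj_ratio_of_diffeo I S T p1 p2 q1 q2 f) as [H|H]; auto;
      [exists 1%Z | exists (-1)%Z]; split; auto; intros r; rewrite H; simpl; field; auto.
  - intros [eps [[-> | ->] H]]; apply conj_of_ratio; auto; [left|right];
      intros r; rewrite H; simpl; field; auto.
Qed.
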